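(* Let $\mathbb F$ be a field of characteristic $0$ and $A=\mathbb F[x,y,u,v]/\langle(1-x^2)(1-y^2)-(u^2+v^2)\rangle$. Let $$N=\begin{pmatrix}-u&v&1-x^2&0\\-v&-u&0&1-x^2\\1-y^2&0&-u&-v\\0&1-y^2&v&-u\end{pmatrix},\qquad M=\begin{pmatrix}u&v&1-x^2&0\\-v&u&0&1-x^2\\1-y^2&0&u&-v\\0&1-y^2&v&u\end{pmatrix},$$ viewed as $A$-linear maps $A^4\to A^4$. Then the kernel of $N$ equals the $A$-submodule of $A^4$ generated by the columns of $M$. *)

From HB Require Import structures.
From mathcomp Require Import all_boot all_order all_algebra.
Set Implicit Arguments. Unset Strict Implicit. Unset Printing Implicit Defensive.
Import GRing.Theory.
Local Open Scope ring_scope.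

(* F[x,y,u,v] as iterated univariate polynomials:
   x is the outermost variable, v the innermost. *)
Definition P4 (F : fieldType) := {poly {poly {poly {poly F}}}}.

Definition vx (F : fieldType) : P4 F := 'X.
Definition vy (F : fieldType) : P4 F := ('X)%:P.
Definition vu (F : fieldType) : P4 F := ('X)%:P%:P.
Definition vv (F : fieldType) : P4 F := ('X)%:P%:P%:P.

Definition relA (F : fieldType) : P4 F :=
  (1 - vx F ^+ 2) * (1 - vy F ^+ 2) - (vu F ^+ 2 + vv F ^+ 2).

Definition Nmat (F : fieldType) : 'M[P4 F]_4 :=
  let x := vx F in let y := vy F in let u := vu F in let v := vv F in
  \matrix_(i < 4, j < 4)
    nth 0 (nth [::] [:: [:: -u; v; 1 - x^+2; 0];
                        [:: -v; -u; 0; 1 - x^+2];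
                        [:: 1 - y^+2; 0; -u; -v];
                        [:: 0; 1 - y^+2; v; -u]] i) j.

Definition Mmat (F : fieldType) : 'M[P4 F]_4 :=
  let x := vx F in let y := vy F in let u := vu F in let v := vv F in
  \matrix_(i < 4, j < 4)
    nth 0 (nth [::] [:: [:: u; v; 1 - x^+2; 0];
                        [:: -v; u; 0; 1 - x^+2];
                        [:: 1 - y^+2; 0; u; -v];
                        [:: 0; 1 - y^+2; v; u]] i) j.

(* Working in A^4 = (F[x,y,u,v]/<relA>)^4 via representatives:
   the class of w lies in ker N  iff  N w is in relA * P^4;
   the class of w lies in the A-span of the columns of M
   iff w = M c + relA * q for some c, q in P^4. *)
Definition in_kerA (F : fieldType) (w : 'cV[P4 F]_4) : Prop :=
  exists q : 'cV[P4 F]_4, Nmat F *m w = relA F *: q.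

Definition in_colspanA (F : fieldType) (w : 'cV[P4 F]_4) : Prop :=
  exists c q : 'cV[P4 F]_4, w = Mmat F *m c + relA F *: q.

From HB Require Import structures.
From mathcomp Require Import all_boot all_order all_algebra.
From mathcomp Require Import ring.
Set Implicit Arguments. Unset Strict Implicit. Unset Printing Implicit Defensive.
Import GRing.Theory.
Local Open Scope ring_scope.

(* The pair (M, N) is a matrix factorization of the defining relation
   r = (1 - x^2)(1 - y^2) - (u^2 + v^2) of A: over any commutative ring the
   quaternion-like matrices satisfy  M N = N M = r I.  For a matrix
   factorization of a nonzero element r of an integral domain, the kernel of N
   modulo r is exactly the image of M modulo r:
   - if N w = r q, then r w = M N w = r (M q), hence w = M q after cancelling r;
   - conversely N (M c + r q) = r (c + N q). *)

Section MatrixFactorization.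

Variables (R : idomainType) (n k : nat) (M N : 'M[R]_n) (r : R).

Lemma kernel_mod_in_image (w q : 'M[R]_(n, k)) :
  r != 0 -> M *m N = r%:M -> N *m w = r *: q -> w = M *m q.
Proof.
move=> r_neq0 MN Nw; apply: (scalemx_inj r_neq0).
by rewrite scalemxAr -Nw mulmxA MN mul_scalar_mx.
Qed.

Lemma image_mod_in_kernel (c q : 'M[R]_(n, k)) :
  N *m M = r%:M -> N *m (M *m c + r *: q) = r *: (c + N *m q).
Proof.
by move=> NM; rewrite mulmxDr mulmxA NM mul_scalar_mx -scalemxAr scalerDr.
Qed.

End MatrixFactorization.

Definition Ngen (R : comPzRingType) (a b u v : R) : 'M[R]_4 :=
  \matrix_(i < 4, j < 4)
    nth 0 (nth [::] [:: [:: -u; v; a; 0];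
                        [:: -v; -u; 0; a];
                        [:: b; 0; -u; -v];
                        [:: 0; b; v; -u]] i) j.

Definition Mgen (R : comPzRingType) (a b u v : R) : 'M[R]_4 :=
  \matrix_(i < 4, j < 4)
    nth 0 (nth [::] [:: [:: u; v; a; 0];
                        [:: -v; u; 0; a];
                        [:: b; 0; u; -v];
                        [:: 0; b; v; u]] i) j.

Lemma Mgen_Ngen (R : comPzRingType) (a b u v : R) :
  Mgen a b u v *m Ngen a b u v = (a * b - (u ^+ 2 + v ^+ 2))%:M.
Proof.
apply/matrixP => -[[|[|[|[|i]]]] Hi] // -[[|[|[|[|j]]]] Hj] //;
by rewrite !mxE !big_ord_recl big_ord0 !mxE /=; ring.
Qed.

Lemma Ngen_Mgen (R : comPzRingType) (a b u v : R) :
  Ngen a b u v *m Mgen a b u v = (a * b - (u ^+ 2 + v ^+ 2))%:M.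
Proof.
apply/matrixP => -[[|[|[|[|i]]]] Hi] // -[[|[|[|[|j]]]] Hj] //;
by rewrite !mxE !big_ord_recl big_ord0 !mxE /=; ring.
Qed.

Lemma MmatE (F : fieldType) :
  Mmat F = Mgen (1 - vx F ^+ 2) (1 - vy F ^+ 2) (vu F) (vv F).
Proof. by []. Qed.

Lemma NmatE (F : fieldType) :
  Nmat F = Ngen (1 - vx F ^+ 2) (1 - vy F ^+ 2) (vu F) (vv F).
Proof. by []. Qed.

Lemma Mmat_Nmat (F : fieldType) : Mmat F *m Nmat F = (relA F)%:M.
Proof. by rewrite MmatE NmatE Mgen_Ngen. Qed.

Lemma Nmat_Mmat (F : fieldType) : Nmat F *m Mmat F = (relA F)%:M.
Proof. by rewrite MmatE NmatE Ngen_Mgen. Qed.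

(* The relation r is a nonzero polynomial: its value at the origin is 1. *)
Lemma relA_neq0 (F : fieldType) : relA F != 0.
Proof.
apply/negP => /eqP r0.
have : (relA F).[0].[0].[0].[0] = 0 by rewrite r0 !horner0.
rewrite /relA /vx /vy /vu /vv !hornerE.
by rewrite expr0n addr0 !subr0 mulr1 => /eqP; rewrite oner_eq0.
Qed.

Theorem mainTheorem19 (F : fieldType) (charF0 : [pchar F] =i pred0)
  (w : 'cV[P4 F]_4) :
  in_kerA w <-> in_colspanA w.
Proof.
split => [[q Nw] | [c [q ->]]].
- exists q, 0; rewrite scaler0 addr0.
  exact: kernel_mod_in_image (relA_neq0 F) (Mmat_Nmat F) Nw.
- exists (c + Nmat F *m q).
  exact: image_mod_in_kernel (Nmat_Mmat F).
Qed.
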